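(* Let $G=\langle a,b,c\mid a^2=b^2=c^2=(ab)^3=(bc)^3=(ca)^3=1\rangle$ act on the Euclidean plane $\mathbf E^2$ as the reflection group of the tiling by equilateral triangles, and give $\mathbf E^2$ the structure of a space with walls whose walls are the lines of this tiling (each line determining the two open-or-closed half-planes it bounds, chosen as a complementary pair). Then the associated CAT(0) cube complex $X$ is isomorphic to $\mathbf R^3$ with its standard cubulation (vertex set $\mathbf Z^3$); the induced action of $G$ on $X$ is proper, preserves a plane perpendicular to $(1,1,1)$ on which it acts cocompactly, but is not cocompact on $X$.
   Context: A space with walls is a set $Y$ with a non-empty collection $\mathcal H\subset\mathcal P(Y)$ of non-empty subsets closed under complement, such that for any $p,q\in Y$ only finitely many $h\in\mathcal H$ contain $p$ but not $q$. Walls: $\{h,h^c\}$; $W$ the set of walls; walls cross if all four intersections of their half-spaces are non-empty. The associated cube complex $X$: vertices are the admissible sections $\sigma:W\to\mathcal H$ ($\sigma(\overline h)\in\overline h$ and $\sigma(\overline h)\not\subseteq\sigma(\overline k)^c$ for all walls $\overline h,\overline k$) lying in the connected component, of the graph joining sections differing on exactly one wall, which contains $\sigma_p$ ($\sigma_p(\overline h)$ = the half-space of $\overline h$ containing $p$); a unit $k$-cube is attached along the 1-skeleton-of-a-$k$-cube spanned by each vertex together with $k$ incident edges whose labelling walls pairwise cross. $G$ acts on sections by $(g\sigma)(\overline h)=g(\sigma(g^{-1}\overline h))$. *)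

From Stdlib Require Import Reals ZArith List Relations.
Open Scope R_scope.

(* A section sigma : W -> H is represented by the set of the chosen     *)
(* half-spaces (its image), containing exactly one of h, h^c for each h.*)

Definition compl {Y : Type} (h : Y -> Prop) : Y -> Prop := fun y => ~ h y.

Definition is_section {Y : Type} (H : (Y -> Prop) -> Prop)
    (S : (Y -> Prop) -> Prop) : Prop :=
  (forall h, S h -> H h) /\ (forall h, H h -> (S h <-> ~ S (compl h))).

(* sigma(h) is not contained in sigma(k)^c, i.e. they intersect *)
Definition admissible {Y : Type} (S : (Y -> Prop) -> Prop) : Prop :=
  forall h k, S h -> S k -> exists y, h y /\ k y.

Definition sigma_pt {Y : Type} (H : (Y -> Prop) -> Prop) (p : Y) :
    (Y -> Prop) -> Prop := fun h => H h /\ h p.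

Definition differ_one_wall {Y : Type} (S T : (Y -> Prop) -> Prop) : Prop :=
  exists h, S h /\ T (compl h) /\
    forall k, k <> h -> k <> compl h -> (S k <-> T k).

Definition adm_edge {Y : Type} (H : (Y -> Prop) -> Prop)
    (S T : (Y -> Prop) -> Prop) : Prop :=
  is_section H S /\ admissible S /\ is_section H T /\ admissible T /\
  differ_one_wall S T.

Definition vertexX {Y : Type} (H : (Y -> Prop) -> Prop) (p0 : Y)
    (S : (Y -> Prop) -> Prop) : Prop :=
  clos_refl_trans _ (adm_edge H) (sigma_pt H p0) S.

Definition cross {Y : Type} (h k : Y -> Prop) : Prop :=
  (exists y, h y /\ k y) /\ (exists y, h y /\ ~ k y) /\
  (exists y, ~ h y /\ k y) /\ (exists y, ~ h y /\ ~ k y).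

Definition flip {Y : Type} (S : (Y -> Prop) -> Prop) (l : list (Y -> Prop))
    (T : (Y -> Prop) -> Prop) : (Y -> Prop) -> Prop :=
  fun h => (S h /\ ~ (In h l /\ T h)) \/
           (exists k, In k l /\ T k /\ h = compl k).

(* vertex sets of cubes of X: a vertex S together with k incident edges
   (labelled by the walls of the distinct half-spaces in l, chosen by S)
   whose walls pairwise cross; the cube has vertex set all flips of S
   on subsets of these walls. *)
Definition isCubeX {Y : Type} (H : (Y -> Prop) -> Prop) (p0 : Y)
    (C : ((Y -> Prop) -> Prop) -> Prop) : Prop :=
  exists (S : (Y -> Prop) -> Prop) (l : list (Y -> Prop)),
    vertexX H p0 S /\ NoDup l /\ (forall h, In h l -> S h) /\
    (forall h k, In h l -> In k l -> h <> k -> cross h k) /\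
    (forall h, In h l -> vertexX H p0 (flip S l (fun k => k = h))) /\
    (forall S', C S' <-> exists T, S' = flip S l T).

(* A point (x1,x2) : R*R stands for the point (x1, x2, -x1-x2) of the    *)
(* plane x1+x2+x3 = 0 in Euclidean R^3 (a copy of E^2).                  *)

Definition pt := (R * R)%type.
Definition x1 (p : pt) : R := fst p.
Definition x2 (p : pt) : R := snd p.
Definition x3 (p : pt) : R := - fst p - snd p.

Definition dist2 (p q : pt) : R :=
  (x1 p - x1 q) ^ 2 + (x2 p - x2 q) ^ 2 + (x3 p - x3 q) ^ 2.

Definition interior (A : pt -> Prop) (p : pt) : Prop :=
  exists e, 0 < e /\ forall q, dist2 p q < e -> A q.

Inductive idx := I1 | I2 | I3.
Definition coord (i : idx) (p : pt) : R :=
  match i with I1 => x1 p | I2 => x2 p | I3 => x3 p end.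

(* The lines of the tiling are {coord i = k}, i in {1,2,3}, k in Z.
   Each line bounds the complementary pair {coord i < k} (open),
   {coord i >= k} (closed). *)
Definition halfLT (i : idx) (k : Z) : pt -> Prop := fun p => coord i p < IZR k.
Definition halfGE (i : idx) (k : Z) : pt -> Prop := fun p => IZR k <= coord i p.

Definition Htri (h : pt -> Prop) : Prop :=
  exists i k, h = halfLT i k \/ h = halfGE i k.

(* The reflections in the sides x1 = 0, x2 = 0, x3 = -1 of the tile with
   vertices (0,0,0), (0,1,-1), (1,0,-1). *)
Definition refl_a (p : pt) : pt := (- x1 p, - x3 p).
Definition refl_b (p : pt) : pt := (- x3 p, - x2 p).
Definition refl_c (p : pt) : pt := (1 - x2 p, 1 - x1 p).

Inductive inG : (pt -> pt) -> Prop :=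
| G_id : inG (fun p => p)
| G_a g : inG g -> inG (fun p => refl_a (g p))
| G_b g : inG g -> inG (fun p => refl_b (g p))
| G_c g : inG g -> inG (fun p => refl_c (g p)).

Definition image {Y : Type} (g : Y -> Y) (h : Y -> Prop) : Y -> Prop :=
  fun y => exists x, h x /\ g x = y.

(* Induced action on sections: (g S) chooses in each wall the half-space
   h' with the same interior as g(h) for some chosen h in S
   (half-spaces are identified with g-images up to their boundary line). *)
Definition act_section (H : (pt -> Prop) -> Prop) (g : pt -> pt)
    (S : (pt -> Prop) -> Prop) : (pt -> Prop) -> Prop :=
  fun h' => H h' /\ exists h, S h /\
    forall p, interior h' p <-> interior (image g h) p.

Definition Z3 := (Z * Z * Z)%type.
Definition R3 := (R * R * R)%type.

Definition isCubeZ3 (C : Z3 -> Prop) : Prop :=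
  exists v u : Z3,
    (0 <= (fst (fst u)) <= 1)%Z /\ (0 <= (snd (fst u)) <= 1)%Z /\ (0 <= (snd u) <= 1)%Z /\
    forall z, C z <->
      (((fst (fst v)) <= (fst (fst z)) <= (fst (fst v)) + (fst (fst u)))%Z /\
       ((snd (fst v)) <= (snd (fst z)) <= (snd (fst v)) + (snd (fst u)))%Z /\
       ((snd v) <= (snd z) <= (snd v) + (snd u))%Z).

Definition ofZ3 (z : Z3) : R3 := (IZR (fst (fst z)), IZR (snd (fst z)), IZR (snd z)).

Definition comb3 (t : R) (x y : R3) : R3 :=
  (t * (fst (fst x)) + (1 - t) * (fst (fst y)), t * (snd (fst x)) + (1 - t) * (snd (fst y)),
   t * (snd x) + (1 - t) * (snd y)).

Definition affine3 (f : R3 -> R3) : Prop :=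
  forall x y t, f (comb3 t x y) = comb3 t (f x) (f y).

Definition sum3 (x : R3) : R := (fst (fst x)) + (snd (fst x)) + (snd x).

Definition bounded3 (K : R3 -> Prop) : Prop :=
  exists M, forall x, K x ->
    Rabs (fst (fst x)) <= M /\ Rabs (snd (fst x)) <= M /\ Rabs (snd x) <= M.

(* The lines of the tiling form three parallel families [coord i = k], and two
   lines cross exactly when they belong to different families.  An admissible
   section chooses in each family the half-planes on one side of a threshold,
   and those reachable from [sigma_p] are the sections [sigmaZ z], [z] in Z^3,
   choosing in family [i] the side of the strip [zcoord z i < coord i < zcoord z i + 1].
   A flip along a wall moves one coordinate of [z] by [1], and pairwise crossing
   walls belong to different families, so the cubes of X are the unit cubes of Z^3.
   Each element of G acts on the coordinates by a signed permutation followed by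
   an integral shift with zero sum; on R^3 this is an affine action which is proper
   (finitely many linear parts), preserves or reflects the plane [sum3 = -3/2],
   is cocompact there through its translation lattice, and cannot be cocompact on
   R^3 because it preserves [|sum3 + 3/2|]. *)

From Pilot Require Import Defs.
From Stdlib Require Import Reals ZArith List Relations.
From Stdlib Require Import FinFun Lra Lia.
From Stdlib Require Import ClassicalEpsilon FunctionalExtensionality PropExtensionality.
Open Scope R_scope.

Lemma predicate_ext {A : Type} (P Q : A -> Prop) : (forall x, P x <-> Q x) -> P = Q.
Proof.
  intro H; apply functional_extensionality; intro x.
  apply propositional_extensionality, H.
Qed.

Definition idx_eq_dec (i j : idx) : {i = j} + {i <> j}.
Proof. decide equality. Defined.

Definition half (i : idx) (k : Z) (c : bool) : pt -> Prop :=
  if c then halfGE i k else halfLT i k.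

Definition closed_side (c : bool) (k r : R) : Prop := if c then k <= r else r < k.
Definition open_side (c : bool) (k r : R) : Prop := if c then k < r else r < k.

Lemma half_iff i k c p : half i k c p <-> closed_side c (IZR k) (coord i p).
Proof. destruct c; reflexivity. Qed.

Lemma Htri_half h : Htri h <-> exists i k c, h = half i k c.
Proof.
  split.
  - intros [i [k [H | H]]]; exists i, k; [exists false | exists true]; exact H.
  - intros [i [k [[] H]]]; exists i, k; [right | left]; exact H.
Qed.

Lemma compl_half i k c : compl (half i k c) = half i k (negb c).
Proof.
  apply predicate_ext; intro p; unfold compl.
  rewrite !half_iff; destruct c; simpl; lra.
Qed.

Lemma point_with_coords i j r s : i <> j -> exists p, coord i p = r /\ coord j p = s.
Proof.
  destruct i, j; intro H; try (exfalso; apply H; reflexivity);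
  unfold coord, x1, x2, x3;
  [exists (r, s) | exists (r, -r-s) | exists (s, r)
  | exists (-r-s, r) | exists (s, -r-s) | exists (-r-s, s)];
  simpl; split; ring.
Qed.

Lemma point_with_coord i r : exists p, coord i p = r.
Proof.
  assert (exists j, i <> j) as [j Hj]
    by (destruct i; [exists I2 | exists I1 | exists I1]; discriminate).
  destruct (point_with_coords i j r 0 Hj) as [p [Hp _]]; exists p; exact Hp.
Qed.

Lemma coord_conditions_independent (P Q : R -> Prop) i j : i <> j ->
  (exists r, P r) -> (exists s, ~ Q s) ->
  ~ (forall p, P (coord i p) <-> Q (coord j p)).
Proof.
  intros Hij [r Hr] [s Hs] H.
  destruct (point_with_coords i j r s Hij) as [p [H1 H2]].
  apply Hs; rewrite <- H2; apply H; rewrite H1; exact Hr.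
Qed.

Lemma closed_side_nonempty c k : exists r, closed_side c k r.
Proof. destruct c; [exists k | exists (k - 1)]; simpl; lra. Qed.

Lemma closed_side_proper c k : exists r, ~ closed_side c k r.
Proof. destruct c; [exists (k - 1) | exists k]; simpl; lra. Qed.

Lemma open_side_nonempty c k : exists r, open_side c k r.
Proof. destruct c; [exists (k + 1) | exists (k - 1)]; simpl; lra. Qed.

Lemma open_side_proper c k : exists r, ~ open_side c k r.
Proof. exists k; destruct c; simpl; lra. Qed.

Lemma closed_side_inj c d k m :
  (forall r, closed_side c k r <-> closed_side d m r) -> c = d /\ k = m.
Proof.
  intros H; pose proof (Rmax_l k m); pose proof (Rmax_r k m).
  destruct c, d; simpl in H.
  - split; [reflexivity |].
    pose proof (proj1 (H k) (Rle_refl k)); pose proof (proj2 (H m) (Rle_refl m)); lra.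
  - exfalso; pose proof (proj1 (H (Rmax k m)) ltac:(lra)); lra.
  - exfalso; pose proof (proj2 (H (Rmax k m)) ltac:(lra)); lra.
  - split; [reflexivity |].
    destruct (Rtotal_order k m) as [h | [h | h]]; [| exact h |].
    + pose proof (proj2 (H k) h); lra.
    + pose proof (proj1 (H m) h); lra.
Qed.

Lemma open_side_inj c d k m :
  (forall r, open_side c k r <-> open_side d m r) -> c = d /\ k = m.
Proof.
  intros H; pose proof (Rmax_l k m); pose proof (Rmax_r k m).
  destruct c, d; simpl in H.
  - split; [reflexivity |].
    destruct (Rtotal_order k m) as [h | [h | h]]; [| exact h |].
    + pose proof (proj1 (H m) h); lra.
    + pose proof (proj2 (H k) h); lra.
  - exfalso; pose proof (proj1 (H (Rmax k m + 1)) ltac:(lra)); lra.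
  - exfalso; pose proof (proj2 (H (Rmax k m + 1)) ltac:(lra)); lra.
  - split; [reflexivity |].
    destruct (Rtotal_order k m) as [h | [h | h]]; [| exact h |].
    + pose proof (proj2 (H k) h); lra.
    + pose proof (proj1 (H m) h); lra.
Qed.

Lemma side_family_inj (S : bool -> R -> R -> Prop)
  (Snonempty : forall c k, exists r, S c k r) (Sproper : forall c k, exists r, ~ S c k r)
  (Sinj : forall c d k m, (forall r, S c k r <-> S d m r) -> c = d /\ k = m)
  i k c j m d :
  (forall p, S c (IZR k) (coord i p) <-> S d (IZR m) (coord j p)) -> i = j /\ k = m /\ c = d.
Proof.
  intro H; destruct (idx_eq_dec i j) as [<- | ne].
  - assert (Hr : forall r, S c (IZR k) r <-> S d (IZR m) r)
      by (intro r; destruct (point_with_coord i r) as [p <-]; apply H).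
    destruct (Sinj _ _ _ _ Hr) as [-> E]; apply eq_IZR in E; auto.
  - exfalso; exact (coord_conditions_independent _ _ i j ne (Snonempty _ _) (Sproper _ _) H).
Qed.

Lemma half_inj i k c j m d : half i k c = half j m d -> i = j /\ k = m /\ c = d.
Proof.
  intro E.
  apply (side_family_inj closed_side closed_side_nonempty closed_side_proper closed_side_inj).
  intro p; rewrite <- !half_iff, E; reflexivity.
Qed.

(** * The sections attached to points of Z^3 *)

Definition zcoord (z : Z3) (i : idx) : Z :=
  match i with I1 => fst (fst z) | I2 => snd (fst z) | I3 => snd z end.
Definition mkZ3 (f : idx -> Z) : Z3 := ((f I1, f I2), f I3).

Lemma zcoord_mkZ3 f i : zcoord (mkZ3 f) i = f i.
Proof. destruct i; reflexivity. Qed.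

Lemma Z3_ext z w : (forall i, zcoord z i = zcoord w i) -> z = w.
Proof.
  destruct z as [[a b] c], w as [[a' b'] c']; intro H.
  generalize (H I1) (H I2) (H I3); simpl; intros -> -> ->; reflexivity.
Qed.

Definition zside (c : bool) (k n : Z) : Prop := if c then (k <= n)%Z else (n < k)%Z.

(* [sigmaZ z] chooses, on each line [coord i = k], the side containing the open
   unit cell [zcoord z i < coord i < zcoord z i + 1]. *)
Definition sigmaZ (z : Z3) : (pt -> Prop) -> Prop :=
  fun h => exists i k c, h = half i k c /\ zside c k (zcoord z i).

Lemma sigmaZ_half z i k c : sigmaZ z (half i k c) <-> zside c k (zcoord z i).
Proof.
  split.
  - intros [j [m [d [E H]]]]; apply half_inj in E; destruct E as [-> [-> ->]]; exact H.
  - intro H; exists i, k, c; auto.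
Qed.

Lemma sigmaZ_ext (S : (pt -> Prop) -> Prop) z :
  (forall h, S h -> exists i k c, h = half i k c) ->
  (forall i k c, S (half i k c) <-> zside c k (zcoord z i)) -> S = sigmaZ z.
Proof.
  intros Hform Hside; apply predicate_ext; intro h; split.
  - intro Sh; destruct (Hform h Sh) as [i [k [c ->]]]; apply sigmaZ_half, Hside, Sh.
  - intros [i [k [c [-> H]]]]; apply Hside, H.
Qed.

Lemma sigmaZ_inj z w : sigmaZ z = sigmaZ w -> z = w.
Proof.
  intro E; apply Z3_ext; intro i.
  assert (H1 : sigmaZ w (half i (zcoord z i) true))
    by (rewrite <- E; apply sigmaZ_half; simpl; lia).
  assert (H2 : sigmaZ z (half i (zcoord w i) true))
    by (rewrite E; apply sigmaZ_half; simpl; lia).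
  apply sigmaZ_half in H1; apply sigmaZ_half in H2; simpl in *; lia.
Qed.

Lemma sigmaZ_section z : is_section Htri (sigmaZ z).
Proof.
  split.
  - intros h [i [k [c [-> _]]]]; apply Htri_half; eauto.
  - intros h Hh; apply Htri_half in Hh; destruct Hh as [i [k [c ->]]].
    rewrite compl_half, !sigmaZ_half; destruct c; simpl; lia.
Qed.

Lemma half_at_level i k c n p :
  coord i p = IZR n + /2 -> (half i k c p <-> zside c k n).
Proof.
  intro H; rewrite half_iff, H.
  destruct (Z_le_gt_dec k n) as [h | h].
  - pose proof (IZR_le _ _ h); destruct c; simpl; split; intro; lra || lia.
  - assert (IZR (n + 1) <= IZR k) by (apply IZR_le; lia); rewrite plus_IZR in *.
    destruct c; simpl; split; intro; lra || lia.
Qed.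

Lemma sigmaZ_admissible z : admissible (sigmaZ z).
Proof.
  intros h h' [i [k [c [-> Hi]]]] [j [m [d [-> Hj]]]].
  destruct (idx_eq_dec i j) as [<- | ne].
  - destruct (point_with_coord i (IZR (zcoord z i) + /2)) as [p Hp].
    exists p; split; apply (half_at_level _ _ _ _ _ Hp); assumption.
  - destruct (point_with_coords i j (IZR (zcoord z i) + /2) (IZR (zcoord z j) + /2) ne)
      as [p [Hp Hq]].
    exists p; split; [apply (half_at_level _ _ _ _ _ Hp) | apply (half_at_level _ _ _ _ _ Hq)];
      assumption.
Qed.

Lemma le_Int_part k x : IZR k <= x <-> (k <= Int_part x)%Z.
Proof.
  destruct (base_Int_part x) as [H1 H2]; split; intro H.
  - assert (k < Int_part x + 1)%Z by (apply lt_IZR; rewrite plus_IZR; lra); lia.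
  - apply IZR_le in H; lra.
Qed.

Lemma sigma_pt_sigmaZ p0 :
  sigma_pt Htri p0 = sigmaZ (mkZ3 (fun i => Int_part (coord i p0))).
Proof.
  apply sigmaZ_ext.
  - intros h [Hh _]; apply Htri_half, Hh.
  - intros i k c; rewrite zcoord_mkZ3; unfold sigma_pt; rewrite half_iff.
    pose proof (le_Int_part k (coord i p0)) as Hfloor.
    assert (Htri (half i k c)) by (apply Htri_half; eauto).
    destruct c; simpl; split.
    + intros [_ Hk]; apply Hfloor, Hk.
    + intro Hk; split; [assumption | apply Hfloor, Hk].
    + intros [_ Hk]; destruct (Z_lt_le_dec (Int_part (coord i p0)) k); [assumption |].
      apply Hfloor in l; lra.
    + intro Hk; split; [assumption |].
      apply Rnot_le_lt; intro Hle; apply Hfloor in Hle; lia.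
Qed.

Lemma flip_single_differ {Y : Type} (S : (Y -> Prop) -> Prop) h :
  S h -> differ_one_wall S (flip S (h :: nil) (fun k => k = h)).
Proof.
  intro Sh; exists h; split; [exact Sh | split].
  - right; exists h; simpl; auto.
  - intros k Hkh Hkc; unfold flip; simpl; split.
    + intro Sk; left; split; [exact Sk | intros [_ E]; exact (Hkh E)].
    + intros [[Sk _] | [k0 [[<- | []] [_ E]]]]; [exact Sk | contradiction].
Qed.

(* The point [y] only serves to rule out [h = compl h]. *)
Lemma section_differ_flip {Y : Type} (y : Y) H (S T : (Y -> Prop) -> Prop) h :
  is_section H S -> is_section H T -> S h -> T (compl h) ->
  (forall k, k <> h -> k <> compl h -> (S k <-> T k)) ->
  T = flip S (h :: nil) (fun k => k = h).
Proof.
  intros [SH _] [_ TH] Sh Tc Hk.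
  assert (Hnc : h <> compl h).
  { intro E; pose proof (f_equal (fun f => f y) E) as Ey; unfold compl in Ey.
    assert (Hy : ~ h y) by (intro Hy; pose proof Hy as Hy'; rewrite Ey in Hy'; exact (Hy' Hy)).
    apply Hy; rewrite Ey; exact Hy. }
  apply predicate_ext; intro k; unfold flip; simpl.
  destruct (excluded_middle_informative (k = h)) as [-> | Hkh].
  - split; [intro Th; exfalso; exact (proj1 (TH h (SH h Sh)) Th Tc) |].
    intros [[_ F] | [k0 [[<- | []] [_ E]]]]; [exfalso; tauto | contradiction].
  - destruct (excluded_middle_informative (k = compl h)) as [-> | Hkc].
    + split; [intros _; right; exists h; auto | intros _; exact Tc].
    + rewrite <- Hk by assumption; split.
      * intro Sk; left; split; [exact Sk | tauto].
      * intros [[Sk _] | [k0 [[<- | []] [_ E]]]]; [exact Sk | contradiction].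
Qed.

Lemma flip_half S l T i k c :
  (forall h, In h l -> exists j m d, h = half j m d) ->
  flip S l T (half i k c) <->
  (S (half i k c) /\ ~ (In (half i k c) l /\ T (half i k c))) \/
  (In (half i k (negb c)) l /\ T (half i k (negb c))).
Proof.
  intro Hl; unfold flip; split; intros [H | H]; auto; right.
  - destruct H as [k0 [Hin [Tk0 E]]].
    destruct (Hl k0 Hin) as [j [m [d ->]]].
    rewrite compl_half in E; apply half_inj in E; destruct E as [-> [-> ->]].
    rewrite Bool.negb_involutive; auto.
  - exists (half i k (negb c)); rewrite compl_half, Bool.negb_involutive; tauto.
Qed.

(* The six half-planes of [sigmaZ v] bounding the open unit cell of [v]. *)
Definition cell_level (v : Z3) (i : idx) (c : bool) : Z :=
  if c then zcoord v i else (zcoord v i + 1)%Z.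
Definition cell_half (v : Z3) (i : idx) (c : bool) : pt -> Prop :=
  half i (cell_level v i c) c.

Lemma sigmaZ_cell_half v i c : sigmaZ v (cell_half v i c).
Proof. apply sigmaZ_half; destruct c; simpl; lia. Qed.

Lemma cell_half_inj v i c j d : cell_half v i c = cell_half v j d -> i = j /\ c = d.
Proof. intro E; apply half_inj in E; tauto. Qed.

Definition cell_halves (v : Z3) (l : list (pt -> Prop)) : Prop :=
  forall h, In h l -> exists i c, h = cell_half v i c.

Definition no_opposite_halves (v : Z3) (l : list (pt -> Prop)) : Prop :=
  forall i, ~ (In (cell_half v i true) l /\ In (cell_half v i false) l).

Lemma cell_halves_halves v l : cell_halves v l -> forall h, In h l -> exists i k c, h = half i k c.
Proof. intros Hl h Hh; destruct (Hl h Hh) as [i [c ->]]; unfold cell_half; eauto. Qed.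

Lemma in_cell_halves_iff v l (T : (pt -> Prop) -> Prop) i k c : cell_halves v l ->
  (In (half i k c) l /\ T (half i k c)) <->
  (k = cell_level v i c /\ In (cell_half v i c) l /\ T (cell_half v i c)).
Proof.
  intro Hl; split.
  - intros [Hin Th]; destruct (Hl _ Hin) as [j [d E]].
    unfold cell_half in E; apply half_inj in E; destruct E as [<- [-> <-]]; auto.
  - intros [-> H]; exact H.
Qed.

Definition EM := excluded_middle_informative.

Definition flip_dir (v : Z3) (l : list (pt -> Prop)) (T : (pt -> Prop) -> Prop) (i : idx) : Z :=
  if EM (In (cell_half v i true) l /\ T (cell_half v i true)) then (-1)%Z
  else if EM (In (cell_half v i false) l /\ T (cell_half v i false)) then 1%Z
  else 0%Z.

Definition flip_point (v : Z3) (l : list (pt -> Prop)) (T : (pt -> Prop) -> Prop) : Z3 :=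
  mkZ3 (fun i => zcoord v i + flip_dir v l T i)%Z.

Lemma flip_sigmaZ v l T : cell_halves v l -> no_opposite_halves v l ->
  flip (sigmaZ v) l T = sigmaZ (flip_point v l T).
Proof.
  intros Hl Hn; apply sigmaZ_ext.
  - intros h [[[i [k [c [-> _]]]] _] | [k0 [Hk0 [_ ->]]]]; [eauto |].
    destruct (cell_halves_halves v l Hl k0 Hk0) as [i [k [c ->]]].
    rewrite compl_half; eauto.
  - intros i k c.
    rewrite flip_half by exact (cell_halves_halves v l Hl).
    unfold flip_point; rewrite sigmaZ_half, zcoord_mkZ3, !(in_cell_halves_iff v l T) by exact Hl.
    specialize (Hn i); unfold flip_dir, cell_level.
    assert (Hopp : ~ ((In (cell_half v i true) l /\ T (cell_half v i true)) /\
                      (In (cell_half v i false) l /\ T (cell_half v i false)))) by tauto.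
    clear Hn; destruct c; cbn [negb]; revert Hopp.
    all: generalize (In (cell_half v i true) l /\ T (cell_half v i true)) as G1.
    all: generalize (In (cell_half v i false) l /\ T (cell_half v i false)) as G0.
    all: intros G0 G1 Hopp; destruct (EM G1), (EM G0); cbn [zside];
      destruct (Z.eq_dec k (zcoord v i)), (Z.eq_dec k (zcoord v i + 1)); intuition lia.
Qed.

(** * The vertices of X *)

Definition set_coord (z : Z3) (i : idx) (m : Z) : Z3 :=
  mkZ3 (fun j => if idx_eq_dec j i then m else zcoord z j).

Lemma zcoord_set_coord z i m j :
  zcoord (set_coord z i m) j = if idx_eq_dec j i then m else zcoord z j.
Proof. apply zcoord_mkZ3. Qed.

Lemma set_coord_same z i : set_coord z i (zcoord z i) = z.
Proof. apply Z3_ext; intro j; rewrite zcoord_set_coord; destruct (idx_eq_dec j i); congruence. Qed.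

Lemma set_coord_twice z i m m' : set_coord (set_coord z i m) i m' = set_coord z i m'.
Proof.
  apply Z3_ext; intro j; rewrite !zcoord_set_coord; destruct (idx_eq_dec j i); reflexivity.
Qed.

Lemma flip_cell_half v i c :
  flip (sigmaZ v) (cell_half v i c :: nil) (fun h => h = cell_half v i c) =
  sigmaZ (set_coord v i (zcoord v i + if c then -1 else 1)%Z).
Proof.
  rewrite flip_sigmaZ.
  - f_equal; apply Z3_ext; intro j; unfold flip_point, flip_dir.
    rewrite zcoord_mkZ3, zcoord_set_coord.
    destruct (EM _) as [[[E | []] _] | N1]; [| destruct (EM _) as [[[E | []] _] | N0]].
    + apply cell_half_inj in E as [<- ->]; destruct (idx_eq_dec i i); [reflexivity | congruence].
    + apply cell_half_inj in E as [<- ->]; destruct (idx_eq_dec i i); [reflexivity | congruence].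
    + destruct (idx_eq_dec j i) as [-> |]; [| lia].
      exfalso; destruct c; [apply N1 | apply N0]; simpl; auto.
  - intros h [<- | []]; eauto.
  - intros j [[E | []] [E' | []]]; rewrite E in E'; apply cell_half_inj in E'; easy.
Qed.

Lemma adm_edge_cell_step v i (c : bool) :
  adm_edge Htri (sigmaZ v) (sigmaZ (set_coord v i (zcoord v i + if c then -1 else 1)%Z)).
Proof.
  split; [apply sigmaZ_section | split; [apply sigmaZ_admissible |]].
  split; [apply sigmaZ_section | split; [apply sigmaZ_admissible |]].
  rewrite <- flip_cell_half; apply flip_single_differ, sigmaZ_cell_half.
Qed.

Notation adm_path := (clos_refl_trans _ (adm_edge Htri)).

Lemma adm_path_set_coord z i m : adm_path (sigmaZ z) (sigmaZ (set_coord z i m)).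
Proof.
  replace m with (zcoord z i + (m - zcoord z i))%Z by lia.
  generalize (m - zcoord z i)%Z as d; intro d.
  induction d as [| d IH | d IH] using Z.peano_ind.
  - rewrite Z.add_0_r, set_coord_same; apply rt_refl.
  - apply rt_trans with (1 := IH).
    pose proof (adm_edge_cell_step (set_coord z i (zcoord z i + d)) i false) as E.
    rewrite set_coord_twice, zcoord_set_coord in E; destruct (idx_eq_dec i i); [| congruence].
    replace (zcoord z i + Z.succ d)%Z with (zcoord z i + d + 1)%Z by lia; apply rt_step, E.
  - apply rt_trans with (1 := IH).
    pose proof (adm_edge_cell_step (set_coord z i (zcoord z i + d)) i true) as E.
    rewrite set_coord_twice, zcoord_set_coord in E; destruct (idx_eq_dec i i); [| congruence].
    replace (zcoord z i + Z.pred d)%Z with (zcoord z i + d + -1)%Z by lia; apply rt_step, E.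
Qed.

Lemma adm_path_sigmaZ z w : adm_path (sigmaZ z) (sigmaZ w).
Proof.
  set (w1 := set_coord z I1 (zcoord w I1)).
  set (w2 := set_coord w1 I2 (zcoord w I2)).
  apply rt_trans with (sigmaZ w1); [apply adm_path_set_coord |].
  apply rt_trans with (sigmaZ w2); [apply adm_path_set_coord |].
  replace w with (set_coord w2 I3 (zcoord w I3)); [apply adm_path_set_coord |].
  apply Z3_ext; intros []; unfold w2, w1; rewrite !zcoord_set_coord; reflexivity.
Qed.

Lemma half_disjoint_levels (T : (pt -> Prop) -> Prop) i a b :
  admissible T -> T (half i a false) -> T (half i b true) -> (b < a)%Z.
Proof.
  intros HT Ha Hb; destruct (HT _ _ Ha Hb) as [y [Hy1 Hy2]].
  apply half_iff in Hy1; apply half_iff in Hy2; simpl in *; apply lt_IZR; lra.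
Qed.

(* If flipping [sigmaZ v] along one of its half-planes [h] stays admissible,
   then [h] bounds the cell of [v]: otherwise a parallel half-plane of
   [sigmaZ v] between [h] and the cell would be disjoint from [compl h]. *)
Lemma admissible_flip_cell_half v l h :
  In h l -> sigmaZ v h -> admissible (flip (sigmaZ v) l (fun k => k = h)) ->
  exists i c, h = cell_half v i c.
Proof.
  intros Hin [i [k [c [-> Hk]]]] Hadm; exists i, c.
  assert (Hc : flip (sigmaZ v) l (fun h' => h' = half i k c) (half i k (negb c)))
    by (right; exists (half i k c); rewrite compl_half; auto).
  assert (Hkeep : forall m d, m <> k -> zside d m (zcoord v i) ->
            flip (sigmaZ v) l (fun h' => h' = half i k c) (half i m d)).
  { intros m d ne Hm; left; split; [apply sigmaZ_half, Hm |].
    intros [_ E]; apply half_inj in E; tauto. }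
  unfold cell_half, cell_level; f_equal; destruct c; simpl in Hk, Hc.
  - destruct (Z.eq_dec k (zcoord v i)) as [| ne]; [assumption | exfalso].
    assert (k + 1 < k)%Z by (apply (half_disjoint_levels _ i _ _ Hadm Hc), Hkeep; simpl; lia).
    lia.
  - destruct (Z.eq_dec k (zcoord v i + 1)) as [| ne]; [assumption | exfalso].
    assert (k < k - 1)%Z
      by (apply (half_disjoint_levels _ i _ _ Hadm); [apply Hkeep; simpl; lia | exact Hc]).
    lia.
Qed.

Lemma adm_edge_from_sigmaZ z T : adm_edge Htri (sigmaZ z) T -> exists w, T = sigmaZ w.
Proof.
  intros [Hsz [_ [HsT [HaT [h [Hh [Hc Hk]]]]]]].
  pose proof (section_differ_flip (0, 0) _ _ _ _ Hsz HsT Hh Hc Hk) as ET.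
  rewrite ET in HaT.
  destruct (admissible_flip_cell_half z _ h (in_eq h nil) Hh HaT) as [i [c ->]].
  rewrite ET, flip_cell_half; eauto.
Qed.

Lemma vertexX_iff p0 S : vertexX Htri p0 S <-> exists z, S = sigmaZ z.
Proof.
  unfold vertexX; rewrite sigma_pt_sigmaZ; split.
  - intro H; remember (sigmaZ (mkZ3 (fun i => Int_part (coord i p0)))) as S0 eqn:E.
    assert (E0 : exists z, S0 = sigmaZ z) by eauto; clear E.
    induction H as [S0 S1 Hedge | | ]; auto.
    destruct E0 as [z ->]; exact (adm_edge_from_sigmaZ z S1 Hedge).
  - intros [z ->]; apply adm_path_sigmaZ.
Qed.

Lemma vertexX_sigmaZ p0 z : vertexX Htri p0 (sigmaZ z).
Proof. apply vertexX_iff; eauto. Qed.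

Lemma dist2_coord i p q : (coord i p - coord i q) ^ 2 <= dist2 p q.
Proof.
  unfold dist2; pose proof (pow2_ge_0 (x1 p - x1 q)); pose proof (pow2_ge_0 (x2 p - x2 q));
  pose proof (pow2_ge_0 (x3 p - x3 q)); destruct i; simpl coord; lra.
Qed.

Lemma move_along_coord i d p : exists q, coord i q = coord i p + d /\ dist2 p q = 2 * d ^ 2.
Proof.
  destruct p as [a b]; destruct i; [exists (a + d, b) | exists (a, b + d) | exists (a - d, b)];
    unfold dist2, coord, x1, x2, x3; simpl; split; ring.
Qed.

Lemma small_step e : 0 < e -> exists d, 0 < d /\ 2 * d ^ 2 < e.
Proof.
  intro He; exists (Rmin 1 (e / 4)).
  pose proof (Rmin_l 1 (e / 4)); pose proof (Rmin_r 1 (e / 4)).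
  assert (0 < Rmin 1 (e / 4)) by (apply Rmin_pos; lra).
  split; [assumption |]; set (d := Rmin 1 (e / 4)) in *.
  assert (d * d <= d * (e / 4)) by (apply Rmult_le_compat_l; lra).
  assert (d * (e / 4) <= 1 * (e / 4)) by (apply Rmult_le_compat_r; lra).
  simpl; lra.
Qed.

Lemma interior_coord_gt (A : pt -> Prop) i r p :
  (forall q, r < coord i q -> A q) -> (forall q, A q -> r <= coord i q) ->
  (Defs.interior A p <-> r < coord i p).
Proof.
  intros Hin Hout; split.
  - intros [e [He Hball]]; destruct (Rlt_or_le r (coord i p)) as [h | h]; [exact h | exfalso].
    destruct (small_step e He) as [d [Hd1 Hd2]].
    destruct (move_along_coord i (- d) p) as [q [Hq1 Hq2]].
    assert (dist2 p q < e) by (rewrite Hq2; replace ((- d) ^ 2) with (d ^ 2) by ring; lra).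
    pose proof (Hout q (Hball q H)); lra.
  - intro h; exists ((coord i p - r) ^ 2); split; [apply pow_lt; lra |].
    intros q Hq; apply Hin; pose proof (dist2_coord i p q).
    destruct (Rlt_or_le r (coord i q)) as [h' | h']; [exact h' | exfalso].
    assert ((coord i p - r) ^ 2 <= (coord i p - coord i q) ^ 2) by (apply pow_incr; lra); lra.
Qed.

Lemma interior_coord_lt (A : pt -> Prop) i r p :
  (forall q, coord i q < r -> A q) -> (forall q, A q -> coord i q <= r) ->
  (Defs.interior A p <-> coord i p < r).
Proof.
  intros Hin Hout; split.
  - intros [e [He Hball]]; destruct (Rlt_or_le (coord i p) r) as [h | h]; [exact h | exfalso].
    destruct (small_step e He) as [d [Hd1 Hd2]].
    destruct (move_along_coord i d p) as [q [Hq1 Hq2]].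
    assert (dist2 p q < e) by (rewrite Hq2; lra).
    pose proof (Hout q (Hball q H)); lra.
  - intro h; exists ((r - coord i p) ^ 2); split; [apply pow_lt; lra |].
    intros q Hq; apply Hin; pose proof (dist2_coord i p q).
    destruct (Rlt_or_le (coord i q) r) as [h' | h']; [exact h' | exfalso].
    assert ((r - coord i p) ^ 2 <= (coord i q - coord i p) ^ 2) by (apply pow_incr; lra).
    replace ((coord i q - coord i p) ^ 2) with ((coord i p - coord i q) ^ 2) in * by ring; lra.
Qed.

Lemma interior_ext (A B : pt -> Prop) p :
  (forall q, A q <-> B q) -> (Defs.interior A p <-> Defs.interior B p).
Proof. intro H; split; intros [e [He Hb]]; exists e; split; auto; intros q Hq; apply H; auto. Qed.

Lemma interior_half i k c p : Defs.interior (half i k c) p <-> open_side c (IZR k) (coord i p).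
Proof.
  destruct c; simpl; [apply interior_coord_gt | apply interior_coord_lt];
    intro q; unfold halfGE, halfLT; lra.
Qed.

Lemma interior_half_inj i k c j m d :
  (forall p, Defs.interior (half i k c) p <-> Defs.interior (half j m d) p) ->
  i = j /\ k = m /\ c = d.
Proof.
  intro H; apply (side_family_inj open_side open_side_nonempty open_side_proper open_side_inj).
  intro p; rewrite <- !interior_half; apply H.
Qed.

(** * The reflection group *)

Definition sgn (s : bool) (r : R) : R := if s then r else - r.

Record motion := Motion { msign : bool; mperm : idx -> idx; mshift : idx -> Z }.

Definition moves_coords (g : pt -> pt) (m : motion) : Prop :=
  forall i p, coord i (g p) = sgn (msign m) (coord (mperm m i) p) + IZR (mshift m i).

(* The permutations of [{I1, I2, I3}], described by surjectivity and by the
   invariance of coordinate sums. *)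
Definition coord_perm (pi : idx -> idx) : Prop :=
  (forall i, exists j, pi j = i) /\
  (forall f : idx -> R, f (pi I1) + f (pi I2) + f (pi I3) = f I1 + f I2 + f I3).

Definition tiling_motion (g : pt -> pt) (m : motion) : Prop :=
  coord_perm (mperm m) /\ (mshift m I1 + mshift m I2 + mshift m I3 = 0)%Z /\ moves_coords g m.

Lemma tiling_motion_reflect (r : pt -> pt) sig tr g m :
  (forall q i, coord i (r q) = - coord (sig i) q + IZR (tr i)) -> coord_perm sig ->
  (tr I1 + tr I2 + tr I3 = 0)%Z -> tiling_motion g m ->
  tiling_motion (fun p => r (g p))
    (Motion (negb (msign m)) (fun i => mperm m (sig i)) (fun i => tr i - mshift m (sig i))%Z).
Proof.
  destruct m as [s pi t]; simpl.
  intros Hr [Hs1 Hs2] Htr [[Hp1 Hp2] [Ht Hg]]; simpl in *; split; [split | split]; simpl.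
  - intro i; destruct (Hp1 i) as [j <-]; destruct (Hs1 j) as [j' <-]; eauto.
  - intro f; rewrite (Hs2 (fun i => f (pi i))); apply Hp2.
  - assert (t (sig I1) + t (sig I2) + t (sig I3) = t I1 + t I2 + t I3)%Z
      by (apply eq_IZR; rewrite !plus_IZR; apply (Hs2 (fun i => IZR (t i)))).
    lia.
  - intros i p; rewrite Hr, Hg; simpl; destruct s; simpl; rewrite minus_IZR; ring.
Qed.

Definition perm_a (i : idx) : idx := match i with I1 => I1 | I2 => I3 | I3 => I2 end.
Definition perm_b (i : idx) : idx := match i with I1 => I3 | I2 => I2 | I3 => I1 end.
Definition perm_c (i : idx) : idx := match i with I1 => I2 | I2 => I1 | I3 => I3 end.
Definition shift_c (i : idx) : Z := match i with I1 => 1%Z | I2 => 1%Z | I3 => (-2)%Z end.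

Lemma coord_refl_a q i : coord i (refl_a q) = - coord (perm_a i) q + IZR 0.
Proof. destruct i; unfold refl_a, coord, x1, x2, x3; simpl; ring. Qed.
Lemma coord_refl_b q i : coord i (refl_b q) = - coord (perm_b i) q + IZR 0.
Proof. destruct i; unfold refl_b, coord, x1, x2, x3; simpl; ring. Qed.
Lemma coord_refl_c q i : coord i (refl_c q) = - coord (perm_c i) q + IZR (shift_c i).
Proof. destruct i; unfold refl_c, coord, x1, x2, x3; simpl; ring. Qed.

Lemma coord_perm_involution (pi : idx -> idx) : (forall i, pi (pi i) = i) ->
  (forall f : idx -> R, f (pi I1) + f (pi I2) + f (pi I3) = f I1 + f I2 + f I3) ->
  coord_perm pi.
Proof. intros Hinv Hsum; split; [intro i; exists (pi i); apply Hinv | exact Hsum]. Qed.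

Lemma coord_perm_a : coord_perm perm_a.
Proof. apply coord_perm_involution; [intros [] | intro f; simpl]; reflexivity || ring. Qed.
Lemma coord_perm_b : coord_perm perm_b.
Proof. apply coord_perm_involution; [intros [] | intro f; simpl]; reflexivity || ring. Qed.
Lemma coord_perm_c : coord_perm perm_c.
Proof. apply coord_perm_involution; [intros [] | intro f; simpl]; reflexivity || ring. Qed.

Lemma inG_tiling_motion g : inG g -> exists m, tiling_motion g m.
Proof.
  induction 1 as [| g _ [m Hm] | g _ [m Hm] | g _ [m Hm]].
  - exists (Motion true (fun i => i) (fun _ => 0%Z)); split; [split | split]; simpl.
    + intro i; exists i; reflexivity.
    + reflexivity.
    + reflexivity.
    + intros i p; simpl; ring.
  - eexists; exact (tiling_motion_reflect _ perm_a (fun _ => 0%Z) g m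
                      coord_refl_a coord_perm_a eq_refl Hm).
  - eexists; exact (tiling_motion_reflect _ perm_b (fun _ => 0%Z) g m
                      coord_refl_b coord_perm_b eq_refl Hm).
  - eexists; exact (tiling_motion_reflect _ perm_c shift_c g m
                      coord_refl_c coord_perm_c eq_refl Hm).
Qed.

Lemma inG_surjective g : inG g -> forall y, exists x, g x = y.
Proof.
  induction 1 as [| g _ IH | g _ IH | g _ IH]; intro y;
    [exists y; reflexivity | destruct (IH (refl_a y)) as [x Hx]
    | destruct (IH (refl_b y)) as [x Hx] | destruct (IH (refl_c y)) as [x Hx]];
    exists x; rewrite Hx; destruct y; unfold refl_a, refl_b, refl_c, x1, x2, x3; simpl;
    f_equal; ring.
Qed.

Lemma moves_coords_unique g m m' : moves_coords g m -> moves_coords g m' ->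
  msign m = msign m' /\ (forall i, mperm m i = mperm m' i) /\ (forall i, mshift m i = mshift m' i).
Proof.
  destruct m as [s pi t], m' as [s' pi' t']; unfold moves_coords; simpl; intros H H'.
  assert (Ht : forall i, t i = t' i).
  { intro i; pose proof (H i (0, 0)) as H0; pose proof (H' i (0, 0)) as H1.
    rewrite H0 in H1; apply eq_IZR.
    destruct s, s', (pi i), (pi' i); unfold sgn, coord, x1, x2, x3 in H1; simpl in H1; lra. }
  assert (key : forall i, s = s' /\ pi i = pi' i).
  { intro i; pose proof (H i (1, 0)) as K1; pose proof (H' i (1, 0)) as K1'.
    pose proof (H i (0, 1)) as K2; pose proof (H' i (0, 1)) as K2'.
    rewrite K1 in K1'; rewrite K2 in K2'; rewrite Ht in K1', K2'.
    destruct s, s', (pi i), (pi' i); unfold sgn, coord, x1, x2, x3 in *; simpl in *;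
      auto; exfalso; lra. }
  split; [apply (key I1) | split; [intro i; apply (key i) | exact Ht]].
Qed.

Definition image_level (m : motion) (i : idx) (k : Z) : Z :=
  if msign m then (k + mshift m i)%Z else (mshift m i - k)%Z.
Definition image_side (m : motion) (c : bool) : bool := if msign m then c else negb c.

(* The image of a half-plane of [Htri] under a reflection is closed on the
   wrong side, so it is not itself in [Htri]; only its interior is. *)
Lemma interior_image_half g m i k c p :
  (forall y, exists x, g x = y) -> moves_coords g m ->
  Defs.interior (Defs.image g (half (mperm m i) k c)) p <->
  Defs.interior (half i (image_level m i k) (image_side m c)) p.
Proof.
  destruct m as [s pi t]; unfold moves_coords, image_level, image_side; simpl; intros Hsurj Hg.
  assert (Himg : forall y, Defs.image g (half (pi i) k c) y <->
                           closed_side c (IZR k) (sgn s (coord i y - IZR (t i)))).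
  { intro y; split.
    - intros [x [Hx <-]]; rewrite Hg; rewrite half_iff in Hx.
      replace (sgn s (sgn s (coord (pi i) x) + IZR (t i) - IZR (t i))) with (coord (pi i) x)
        by (destruct s; simpl; ring); exact Hx.
    - intro H; destruct (Hsurj y) as [x <-]; exists x; split; [| reflexivity].
      rewrite half_iff; rewrite Hg in H.
      replace (sgn s (sgn s (coord (pi i) x) + IZR (t i) - IZR (t i))) with (coord (pi i) x) in H
        by (destruct s; simpl; ring); exact H. }
  rewrite (interior_ext _ _ p Himg), interior_half.
  destruct s, c; simpl; rewrite ?plus_IZR, ?minus_IZR;
    [ apply interior_coord_gt | apply interior_coord_lt
    | apply interior_coord_lt | apply interior_coord_gt ];
    intro q; simpl; lra.
Qed.

Definition zact (m : motion) (z : Z3) : Z3 :=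
  mkZ3 (fun i => if msign m then (zcoord z (mperm m i) + mshift m i)%Z
                 else (mshift m i - 1 - zcoord z (mperm m i))%Z).

Lemma act_section_sigmaZ g m z :
  (forall y, exists x, g x = y) -> tiling_motion g m ->
  act_section Htri g (sigmaZ z) = sigmaZ (zact m z).
Proof.
  intros Hsurj [[Hperm _] [_ Hg]]; apply sigmaZ_ext.
  - intros h [Hh _]; apply Htri_half, Hh.
  - intros i k d; unfold zact; rewrite zcoord_mkZ3; unfold act_section; split.
    + intros [_ [h [[j [k0 [c [-> Hz]]]] Hint]]].
      destruct (Hperm j) as [i' <-].
      assert (Hii : forall p, Defs.interior (half i k d) p <->
                     Defs.interior (half i' (image_level m i' k0) (image_side m c)) p)
        by (intro p; rewrite Hint; apply interior_image_half; assumption).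
      apply interior_half_inj in Hii; destruct Hii as [<- [-> ->]].
      unfold image_level, image_side; destruct (msign m), c; simpl in *; lia.
    + intro Hz; split; [apply Htri_half; eauto |].
      exists (half (mperm m i) (if msign m then k - mshift m i else mshift m i - k)%Z
                   (image_side m d)).
      split.
      * apply sigmaZ_half; unfold image_side; destruct (msign m), d; simpl in *; lia.
      * intro p; rewrite interior_image_half by assumption.
        replace (half i (image_level m i _) (image_side m (image_side m d))) with (half i k d);
          [reflexivity |].
        unfold image_level, image_side; destruct (msign m);
          [| rewrite Bool.negb_involutive]; f_equal; lia.
Qed.

Definition rcoord (x : R3) (i : idx) : R :=
  match i with I1 => fst (fst x) | I2 => snd (fst x) | I3 => snd x end.
Definition mkR3 (f : idx -> R) : R3 := ((f I1, f I2), f I3).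

Lemma rcoord_mkR3 f i : rcoord (mkR3 f) i = f i.
Proof. destruct i; reflexivity. Qed.

Lemma mkR3_ext f f' : (forall i, f i = f' i) -> mkR3 f = mkR3 f'.
Proof. intro H; unfold mkR3; rewrite !H; reflexivity. Qed.

Lemma mkR3_rcoord x : mkR3 (rcoord x) = x.
Proof. destruct x as [[a b] c]; reflexivity. Qed.

Lemma rcoord_ofZ3 z i : rcoord (ofZ3 z) i = IZR (zcoord z i).
Proof. destruct i; reflexivity. Qed.

Lemma sum3_rcoord x : sum3 x = rcoord x I1 + rcoord x I2 + rcoord x I3.
Proof. reflexivity. Qed.

(* For a reflection the unit cube [z, z + 1] goes to [t - z - 1, t - z],
   whence the [- 1]. *)
Definition motion_affine (m : motion) (x : R3) : R3 :=
  mkR3 (fun i => if msign m then rcoord x (mperm m i) + IZR (mshift m i)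
                 else IZR (mshift m i) - 1 - rcoord x (mperm m i)).

Lemma ofZ3_zact m z : ofZ3 (zact m z) = motion_affine m (ofZ3 z).
Proof.
  rewrite <- (mkR3_rcoord (ofZ3 (zact m z))); apply mkR3_ext; intro i.
  unfold zact; rewrite !rcoord_ofZ3, zcoord_mkZ3.
  destruct (msign m); [rewrite plus_IZR | rewrite !minus_IZR]; ring.
Qed.

Lemma motion_affine_affine m : affine3 (motion_affine m).
Proof.
  intros x y u; unfold motion_affine.
  change (comb3 u (mkR3 ?f) (mkR3 ?g)) with (mkR3 (fun i => u * f i + (1 - u) * g i)).
  apply mkR3_ext; intro i.
  replace (rcoord (comb3 u x y) (mperm m i))
    with (u * rcoord x (mperm m i) + (1 - u) * rcoord y (mperm m i))
    by (destruct (mperm m i); reflexivity).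
  destruct (msign m); ring.
Qed.

Lemma sum3_motion_affine g m x : tiling_motion g m ->
  sum3 (motion_affine m x) = if msign m then sum3 x else -3 - sum3 x.
Proof.
  intros [[_ Hp] [Ht _]].
  assert (IZR (mshift m I1) + IZR (mshift m I2) + IZR (mshift m I3) = 0)
    by (rewrite <- !plus_IZR, Ht; reflexivity).
  pose proof (Hp (rcoord x)).
  rewrite (sum3_rcoord x), (sum3_rcoord (motion_affine m x)).
  unfold motion_affine; rewrite !rcoord_mkR3.
  destruct (msign m); lra.
Qed.

Definition motion_of (g : pt -> pt) : motion :=
  epsilon (inhabits (Motion true (fun i => i) (fun _ => 0%Z))) (tiling_motion g).

Definition action (g : pt -> pt) : R3 -> R3 := motion_affine (motion_of g).

Lemma motion_of_spec g : inG g -> tiling_motion g (motion_of g).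
Proof. intro H; unfold motion_of; apply epsilon_spec, inG_tiling_motion, H. Qed.

Lemma action_eq g m : inG g -> tiling_motion g m -> action g = motion_affine m.
Proof.
  intros Hg [_ [_ Hm]]; destruct (motion_of_spec g Hg) as [_ [_ Hm']].
  destruct (moves_coords_unique g _ _ Hm' Hm) as [Es [Ep Et]].
  apply functional_extensionality; intro x; unfold action, motion_affine.
  rewrite Es; apply mkR3_ext; intro i; rewrite Ep, Et; reflexivity.
Qed.

Definition vertex_coords (S : (pt -> Prop) -> Prop) : Z3 :=
  epsilon (inhabits (0%Z, 0%Z, 0%Z)) (fun z => S = sigmaZ z).

Lemma vertex_coords_sigmaZ z : vertex_coords (sigmaZ z) = z.
Proof.
  apply sigmaZ_inj; symmetry; unfold vertex_coords.
  apply (epsilon_spec (inhabits (0%Z, 0%Z, 0%Z)) (fun w => sigmaZ z = sigmaZ w)); eauto.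
Qed.

(** * Cubes *)

Definition star (v : Z3) (d : idx -> Z) (z : Z3) : Prop :=
  forall i, zcoord z i = zcoord v i \/ zcoord z i = (zcoord v i + d i)%Z.

Lemma isCubeZ3_star (D : Z3 -> Prop) v (d : idx -> Z) :
  (forall i, (-1 <= d i <= 1)%Z) -> (forall z, D z <-> star v d z) -> isCubeZ3 D.
Proof.
  intros Hd HD.
  exists (mkZ3 (fun i => Z.min (zcoord v i) (zcoord v i + d i))), (mkZ3 (fun i => Z.abs (d i))).
  pose proof (Hd I1); pose proof (Hd I2); pose proof (Hd I3); simpl.
  split; [lia | split; [lia | split; [lia |]]].
  intro z; rewrite HD; unfold star; split.
  - intro Hz; pose proof (Hz I1); pose proof (Hz I2); pose proof (Hz I3); simpl in *; lia.
  - intros Hz [| |]; simpl; lia.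
Qed.

Lemma isCubeZ3_star_inv (D : Z3 -> Prop) : isCubeZ3 D ->
  exists v (u : idx -> Z), (forall i, (0 <= u i <= 1)%Z) /\ forall z, D z <-> star v u z.
Proof.
  intros [v [u [H1 [H2 [H3 HD]]]]]; exists v, (zcoord u); split; [intros [| |]; simpl; lia |].
  intro z; rewrite HD; unfold star; split.
  - intros Hz [| |]; simpl; lia.
  - intro Hz; pose proof (Hz I1); pose proof (Hz I2); pose proof (Hz I3); simpl in *; lia.
Qed.

Definition cell_dir (v : Z3) (l : list (pt -> Prop)) : idx -> Z := flip_dir v l (fun _ => True).

Lemma cell_dir_bounds v l i : (-1 <= cell_dir v l i <= 1)%Z.
Proof. unfold cell_dir, flip_dir; destruct (EM _); [| destruct (EM _)]; lia. Qed.

Lemma flip_points_star v l : no_opposite_halves v l ->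
  forall z, (exists T, z = flip_point v l T) <-> star v (cell_dir v l) z.
Proof.
  intros Hn z; split.
  - intros [T ->] i; unfold flip_point, cell_dir, flip_dir; rewrite zcoord_mkZ3.
    specialize (Hn i).
    destruct (EM (In (cell_half v i true) l /\ T (cell_half v i true))) as [[H1 _] | N1].
    + destruct (EM (In (cell_half v i true) l /\ True)); [right; lia | tauto].
    + destruct (EM (In (cell_half v i false) l /\ T (cell_half v i false))) as [[H0 _] | N0];
        [| left; lia].
      destruct (EM (In (cell_half v i true) l /\ True)); [tauto |].
      destruct (EM (In (cell_half v i false) l /\ True)); [right; lia | tauto].
  - intro Hz; set (T := fun h => exists i c, h = cell_half v i c /\ zcoord z i <> zcoord v i).
    assert (HT : forall i c, T (cell_half v i c) <-> zcoord z i <> zcoord v i).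
    { intros i c; split; [intros [j [d [E Hne]]]; apply cell_half_inj in E as [-> _]; exact Hne |].
      intro Hne; exists i, c; auto. }
    exists T; apply Z3_ext; intro i; unfold flip_point, flip_dir; rewrite zcoord_mkZ3.
    pose proof (HT i true) as HTt; pose proof (HT i false) as HTf.
    specialize (Hz i); specialize (Hn i); unfold cell_dir, flip_dir in Hz.
    destruct (EM (In (cell_half v i true) l /\ True)) as [[Ht _] | Nt].
    + destruct (EM (In (cell_half v i true) l /\ _)) as [[_ Hne] | N]; [apply HTt in Hne; lia |].
      destruct (EM (In (cell_half v i false) l /\ _)) as [[Hf _] | _]; [tauto |].
      destruct (Z.eq_dec (zcoord z i) (zcoord v i)); [lia | tauto].
    + destruct (EM (In (cell_half v i true) l /\ _)) as [[H1 _] | _]; [tauto |].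
      destruct (EM (In (cell_half v i false) l /\ True)) as [[Hf _] | Nf].
      * destruct (EM (In (cell_half v i false) l /\ _)) as [[_ Hne] | N]; [apply HTf in Hne; lia |].
        destruct (Z.eq_dec (zcoord z i) (zcoord v i)); [lia | tauto].
      * destruct (EM (In (cell_half v i false) l /\ _)) as [[H0 _] | _]; [tauto | lia].
Qed.

Lemma cube_image v l (C : ((pt -> Prop) -> Prop) -> Prop) :
  cell_halves v l -> no_opposite_halves v l -> (forall S, C S -> exists z, S = sigmaZ z) ->
  (forall S, C S <-> exists T, S = flip (sigmaZ v) l T) <->
  (forall z, (exists S, C S /\ vertex_coords S = z) <-> star v (cell_dir v l) z).
Proof.
  intros Hl Hn HC.
  pose proof (fun T => flip_sigmaZ v l T Hl Hn) as Hflip.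
  split.
  - intros HCf z; rewrite <- flip_points_star by exact Hn; split.
    + intros [S [HS <-]]; apply HCf in HS as [T ->]; exists T.
      rewrite Hflip, vertex_coords_sigmaZ; reflexivity.
    + intros [T ->]; exists (sigmaZ (flip_point v l T)).
      rewrite vertex_coords_sigmaZ, <- Hflip; split; [apply HCf; eauto | reflexivity].
  - intros Hstar S; split.
    + intro HS; destruct (HC S HS) as [z ->].
      assert (Hz : star v (cell_dir v l) z)
        by (apply Hstar; exists (sigmaZ z); rewrite vertex_coords_sigmaZ; auto).
      apply flip_points_star in Hz as [T ->]; [| exact Hn]; exists T; rewrite Hflip; reflexivity.
    + intros [T ->]; rewrite Hflip.
      assert (Hz : star v (cell_dir v l) (flip_point v l T))
        by (apply flip_points_star; eauto).
      apply Hstar in Hz as [S [HS E]]; destruct (HC S HS) as [z ->].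
      rewrite vertex_coords_sigmaZ in E; subst z; exact HS.
Qed.

Lemma halves_independent i j a b c d (e f : bool) : i <> j ->
  exists y, (half i a c y <-> e = true) /\ (half j b d y <-> f = true).
Proof.
  intro ne.
  assert (Hlevel : forall a c (e : bool), exists n, zside c a n <-> e = true)
    by (intros a' c' e'; exists (if Bool.eqb c' e' then a' else (a' - 1)%Z);
        destruct c', e'; simpl; split; intro; try lia; discriminate).
  destruct (Hlevel a c e) as [n1 H1], (Hlevel b d f) as [n2 H2].
  destruct (point_with_coords i j (IZR n1 + /2) (IZR n2 + /2) ne) as [y [Hy1 Hy2]].
  exists y; rewrite (half_at_level _ _ _ _ _ Hy1), (half_at_level _ _ _ _ _ Hy2); auto.
Qed.

Lemma cross_halves i j a b c d : i <> j -> cross (half i a c) (half j b d).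
Proof.
  intro ne; unfold cross.
  destruct (halves_independent i j a b c d true true ne) as [y1 H1].
  destruct (halves_independent i j a b c d true false ne) as [y2 H2].
  destruct (halves_independent i j a b c d false true ne) as [y3 H3].
  destruct (halves_independent i j a b c d false false ne) as [y4 H4].
  split; [| split; [| split]].
  - exists y1; rewrite (proj1 H1), (proj2 H1); split; reflexivity.
  - exists y2; rewrite (proj1 H2), (proj2 H2); split; [reflexivity | discriminate].
  - exists y3; rewrite (proj1 H3), (proj2 H3); split; [discriminate | reflexivity].
  - exists y4; rewrite (proj1 H4), (proj2 H4); split; discriminate.
Qed.

Lemma opposite_cell_halves_not_cross v i : ~ cross (cell_half v i true) (cell_half v i false).
Proof.
  intros [_ [_ [_ [y [H1 H2]]]]]; unfold cell_half, cell_level in *.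
  rewrite half_iff in H1, H2; simpl in *; rewrite plus_IZR in H2; lra.
Qed.

Lemma isCubeX_flips p0 C : isCubeX Htri p0 C ->
  exists v l, cell_halves v l /\ no_opposite_halves v l /\
              forall S, C S <-> exists T, S = flip (sigmaZ v) l T.
Proof.
  intros [S [l [HS [_ [Hin [Hcr [Hfl HC]]]]]]].
  apply vertexX_iff in HS as [v ->]; exists v, l; split; [| split; [| exact HC]].
  - intros h Hh; apply (admissible_flip_cell_half v l h Hh (Hin h Hh)).
    destruct (proj1 (vertexX_iff p0 _) (Hfl h Hh)) as [w ->]; apply sigmaZ_admissible.
  - intros i [H1 H0]; apply (opposite_cell_halves_not_cross v i), Hcr; [exact H1 | exact H0 |].
    intro E; apply cell_half_inj in E as [_ E]; discriminate.
Qed.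

Lemma isCubeX_cell p0 v l (C : ((pt -> Prop) -> Prop) -> Prop) :
  cell_halves v l -> no_opposite_halves v l -> NoDup l ->
  (forall S, C S <-> exists T, S = flip (sigmaZ v) l T) -> isCubeX Htri p0 C.
Proof.
  intros Hl Hn Hnd HC; exists (sigmaZ v), l.
  split; [apply vertexX_sigmaZ | split; [exact Hnd | split; [| split; [| split; [| exact HC]]]]].
  - intros h Hh; destruct (Hl h Hh) as [i [c ->]]; apply sigmaZ_cell_half.
  - intros h k Hh Hk ne; destruct (Hl h Hh) as [i [c ->]], (Hl k Hk) as [j [d ->]].
    destruct (idx_eq_dec i j) as [<- | nij]; [| apply cross_halves, nij].
    exfalso; destruct c, d; try (apply ne; reflexivity); apply (Hn i); auto.
  - intros h Hh; rewrite flip_sigmaZ by assumption; apply vertexX_sigmaZ.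
Qed.

Definition idxs : list idx := I1 :: I2 :: I3 :: nil.

Lemma cell_halves_with_dirs v (u : idx -> Z) : (forall i, (0 <= u i <= 1)%Z) ->
  exists l, cell_halves v l /\ no_opposite_halves v l /\ NoDup l /\ forall i, cell_dir v l i = u i.
Proof.
  intro Hu; exists (map (fun i => cell_half v i false) (filter (fun i => Z.eqb (u i) 1) idxs)).
  set (l := map _ _).
  assert (Hin : forall i c, In (cell_half v i c) l <-> c = false /\ u i = 1%Z).
  { intros i c; unfold l; rewrite in_map_iff; split.
    - intros [j [E Hj]]; apply cell_half_inj in E as [-> <-].
      apply filter_In in Hj as [_ Hj]; apply Z.eqb_eq in Hj; auto.
    - intros [-> Hi]; exists i; split; [reflexivity |].
      apply filter_In; split; [destruct i; simpl; auto | apply Z.eqb_eq, Hi]. }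
  split; [| split; [| split]].
  - intros h Hh; unfold l in Hh; apply in_map_iff in Hh as [i [<- _]]; eauto.
  - intros i [Ht _]; apply Hin in Ht as [E _]; discriminate.
  - apply Injective_map_NoDup.
    + intros i j E; apply cell_half_inj in E; tauto.
    + apply NoDup_filter; repeat constructor; simpl; intuition discriminate.
  - intro i; specialize (Hu i); unfold cell_dir, flip_dir.
    destruct (EM _) as [[Ht _] | _]; [apply Hin in Ht as [E _]; discriminate |].
    destruct (EM _) as [[Hf _] | Nf]; [apply Hin in Hf as [_ ->]; reflexivity |].
    destruct (Z.eq_dec (u i) 1); [| lia].
    exfalso; apply Nf; split; [apply Hin; auto | exact I].
Qed.

Lemma isCubeX_iff p0 C : (forall S, C S -> vertexX Htri p0 S) ->
  (isCubeX Htri p0 C <-> isCubeZ3 (fun z => exists S, C S /\ vertex_coords S = z)).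
Proof.
  intro HCv.
  assert (HCs : forall S, C S -> exists z, S = sigmaZ z)
    by (intros S HS; apply (vertexX_iff p0), HCv, HS).
  split.
  - intro Hcube; destruct (isCubeX_flips p0 C Hcube) as [v [l [Hl [Hn HCf]]]].
    apply (isCubeZ3_star _ v (cell_dir v l) (cell_dir_bounds v l)).
    exact (proj1 (cube_image v l C Hl Hn HCs) HCf).
  - intro Hbox; destruct (isCubeZ3_star_inv _ Hbox) as [v [u [Hu HD]]].
    destruct (cell_halves_with_dirs v u Hu) as [l [Hl [Hn [Hnd Hdir]]]].
    apply (isCubeX_cell p0 v l C Hl Hn Hnd).
    apply (cube_image v l C Hl Hn HCs); intro z; rewrite HD.
    unfold star; split; intros Hz i; [rewrite Hdir | rewrite <- Hdir]; apply Hz.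
Qed.

(** * Properness and (non-)cocompactness *)

Lemma Rabs_le_inv x M : Rabs x <= M -> - M <= x <= M.
Proof.
  intro H; pose proof (Rle_abs x); pose proof (Rle_abs (- x)); rewrite Rabs_Ropp in *; lra.
Qed.

Lemma bounded3_rcoord K M x :
  (forall x, K x -> Rabs (fst (fst x)) <= M /\ Rabs (snd (fst x)) <= M /\ Rabs (snd x) <= M) ->
  K x -> forall j, - M <= rcoord x j <= M.
Proof.
  intros HM Kx j; destruct (HM x Kx) as [H1 [H2 H3]]; destruct j; apply Rabs_le_inv; assumption.
Qed.

Definition rangeZ (N : Z) : list Z :=
  map (fun n => (Z.of_nat n - N)%Z) (seq 0 (Z.to_nat (2 * N + 1))).

Lemma in_rangeZ N k : (- N <= k <= N)%Z -> In k (rangeZ N).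
Proof.
  intro H; unfold rangeZ; apply in_map_iff; exists (Z.to_nat (k + N)); split.
  - rewrite Z2Nat.id by lia; lia.
  - apply in_seq; lia.
Qed.

Definition motion_map (s : bool) (j1 j2 : idx) (t1 t2 : Z) : pt -> pt :=
  fun p => (sgn s (coord j1 p) + IZR t1, sgn s (coord j2 p) + IZR t2).

Lemma moves_coords_motion_map g m : moves_coords g m ->
  g = motion_map (msign m) (mperm m I1) (mperm m I2) (mshift m I1) (mshift m I2).
Proof.
  intro Hg; apply functional_extensionality; intro p; unfold motion_map.
  rewrite <- (Hg I1 p), <- (Hg I2 p); destruct (g p); reflexivity.
Qed.

Definition motion_maps (N : Z) : list (pt -> pt) :=
  flat_map (fun s => flat_map (fun j1 => flat_map (fun j2 => flat_map (fun t1 =>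
    map (fun t2 => motion_map s j1 j2 t1 t2) (rangeZ N)) (rangeZ N)) idxs) idxs)
    (true :: false :: nil).

Lemma in_motion_maps N s j1 j2 t1 t2 :
  In t1 (rangeZ N) -> In t2 (rangeZ N) -> In (motion_map s j1 j2 t1 t2) (motion_maps N).
Proof.
  intros H1 H2; unfold motion_maps.
  apply in_flat_map; exists s; split; [destruct s; simpl; auto |].
  apply in_flat_map; exists j1; split; [destruct j1; simpl; auto |].
  apply in_flat_map; exists j2; split; [destruct j2; simpl; auto |].
  apply in_flat_map; exists t1; split; [exact H1 |].
  apply in_map_iff; exists t2; split; [reflexivity | exact H2].
Qed.

(* [G] acts by signed permutations of the coordinates followed by integral
   shifts, and moving a point of [K] back into [K] bounds the shift. *)
Lemma action_proper K : bounded3 K ->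
  exists l : list (pt -> pt), forall g, inG g -> (exists x, K x /\ K (action g x)) -> In g l.
Proof.
  intros [M HM]; set (N := up (2 * M + 1)); exists (motion_maps N).
  intros g Hg [x [Kx KA]].
  destruct (motion_of_spec g Hg) as [_ [_ Hm]]; unfold action in KA.
  set (m := motion_of g) in *.
  assert (Hshift : forall i, In (mshift m i) (rangeZ N)).
  { intro i; apply in_rangeZ.
    pose proof (bounded3_rcoord K M x HM Kx (mperm m i)) as Bx.
    pose proof (bounded3_rcoord K M _ HM KA i) as By.
    unfold motion_affine in By; rewrite rcoord_mkR3 in By.
    assert (- (2 * M + 1) <= IZR (mshift m i) <= 2 * M + 1) by (destruct (msign m); lra).
    destruct (archimed (2 * M + 1)) as [A1 _]; fold N in A1.
    assert (mshift m i < N)%Z by (apply lt_IZR; lra).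
    assert (- N < mshift m i)%Z by (apply lt_IZR; rewrite opp_IZR; lra).
    lia. }
  rewrite (moves_coords_motion_map g m Hm); apply in_motion_maps; apply Hshift.
Qed.

(* In the coordinates [x1, x2, x3], [translation a b] moves by
   [a (2, -1, -1) + b (-1, 2, -1)]; the two generators are products of four
   reflections. *)
Definition translation (a b : Z) (p : pt) : pt :=
  (x1 p + IZR (2 * a - b), x2 p + IZR (2 * b - a)).

Ltac push_IZR :=
  repeat first [rewrite plus_IZR | rewrite minus_IZR | rewrite mult_IZR | rewrite opp_IZR].

Lemma translation_succ_l a b :
  translation (a + 1) b = fun p => refl_b (refl_c (refl_b (refl_a (translation a b p)))).
Proof.
  apply functional_extensionality; intro p;
    unfold translation, refl_a, refl_b, refl_c, x1, x2, x3; cbn [fst snd]; f_equal; push_IZR; ring.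
Qed.

Lemma translation_pred_l a b :
  translation (a - 1) b = fun p => refl_a (refl_b (refl_c (refl_b (translation a b p)))).
Proof.
  apply functional_extensionality; intro p;
    unfold translation, refl_a, refl_b, refl_c, x1, x2, x3; cbn [fst snd]; f_equal; push_IZR; ring.
Qed.

Lemma translation_succ_r a b :
  translation a (b + 1) = fun p => refl_a (refl_c (refl_a (refl_b (translation a b p)))).
Proof.
  apply functional_extensionality; intro p;
    unfold translation, refl_a, refl_b, refl_c, x1, x2, x3; cbn [fst snd]; f_equal; push_IZR; ring.
Qed.

Lemma translation_pred_r a b :
  translation a (b - 1) = fun p => refl_b (refl_a (refl_c (refl_a (translation a b p)))).
Proof.
  apply functional_extensionality; intro p;
    unfold translation, refl_a, refl_b, refl_c, x1, x2, x3; cbn [fst snd]; f_equal; push_IZR; ring.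
Qed.

Lemma inG_translation a b : inG (translation a b).
Proof.
  assert (H0 : forall a, inG (translation a 0)).
  { intro a'; induction a' as [| a' IH | a' IH] using Z.peano_ind.
    - replace (translation 0 0) with (fun p : pt => p); [apply G_id |].
      apply functional_extensionality; intros [u w].
      unfold translation, x1, x2; simpl; f_equal; ring.
    - rewrite <- Z.add_1_r, translation_succ_l; apply G_b, G_c, G_b, G_a, IH.
    - rewrite <- Z.sub_1_r, translation_pred_l; apply G_a, G_b, G_c, G_b, IH. }
  induction b as [| b IH | b IH] using Z.peano_ind.
  - apply H0.
  - rewrite <- Z.add_1_r, translation_succ_r; apply G_a, G_c, G_a, G_b, IH.
  - rewrite <- Z.sub_1_r, translation_pred_r; apply G_b, G_a, G_c, G_a, IH.
Qed.

Definition translation_shift (a b : Z) (i : idx) : Z :=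
  match i with I1 => (2 * a - b)%Z | I2 => (2 * b - a)%Z | I3 => (- a - b)%Z end.

Lemma tiling_motion_translation a b :
  tiling_motion (translation a b) (Motion true (fun i => i) (translation_shift a b)).
Proof.
  split; [split | split]; cbn [mperm mshift msign].
  - intro i; exists i; reflexivity.
  - intro f; reflexivity.
  - unfold translation_shift; lia.
  - intros i p; destruct i; unfold translation, coord, x1, x2, x3, sgn, translation_shift;
      cbn [fst snd msign mperm mshift]; push_IZR; ring.
Qed.

Lemma action_translation a b y :
  action (translation a b) y = mkR3 (fun i => rcoord y i + IZR (translation_shift a b i)).
Proof.
  rewrite (action_eq _ _ (inG_translation a b) (tiling_motion_translation a b)); reflexivity.
Qed.

Lemma action_preserves_plane g x : inG g -> sum3 x = -3/2 -> sum3 (action g x) = -3/2.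
Proof.
  intros Hg Hx; unfold action; rewrite (sum3_motion_affine g) by apply motion_of_spec, Hg.
  destruct (msign (motion_of g)); lra.
Qed.

(* Translations of [G] move a point of the plane [sum3 = -3/2] into the box
   [|x_i| <= 4] by rounding the coordinates [(2 x1 + x2)/3] and [(x1 + 2 x2)/3]
   of the translation lattice. *)
Lemma action_cocompact_on_plane : exists K, bounded3 K /\ (forall x, K x -> sum3 x = -3/2) /\
  forall x, sum3 x = -3/2 -> exists g y, inG g /\ K y /\ x = action g y.
Proof.
  exists (fun y => sum3 y = -3/2 /\ forall i, Rabs (rcoord y i) <= 4).
  split; [exists 4; intros x [_ H]; exact (conj (H I1) (conj (H I2) (H I3))) |].
  split; [intros x [H _]; exact H |].
  intros x Hx; set (a := up ((2 * rcoord x I1 + rcoord x I2) / 3)).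
  set (b := up ((rcoord x I1 + 2 * rcoord x I2) / 3)).
  destruct (archimed ((2 * rcoord x I1 + rcoord x I2) / 3)) as [A1 A2].
  destruct (archimed ((rcoord x I1 + 2 * rcoord x I2) / 3)) as [B1 B2].
  fold a in A1, A2; fold b in B1, B2.
  exists (translation a b), (mkR3 (fun i => rcoord x i - IZR (translation_shift a b i))).
  rewrite sum3_rcoord in Hx; split; [apply inG_translation | split; [split |]].
  - rewrite sum3_rcoord, !rcoord_mkR3; unfold translation_shift; push_IZR; lra.
  - intro i; rewrite rcoord_mkR3; apply Rabs_le.
    destruct i; unfold translation_shift; push_IZR; lra.
  - rewrite action_translation, <- (mkR3_rcoord x) at 1; apply mkR3_ext; intro i.
    rewrite rcoord_mkR3; ring.
Qed.

Lemma action_not_cocompact :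
  ~ (exists K, bounded3 K /\ forall x : R3, exists g y, inG g /\ K y /\ x = action g y).
Proof.
  intros [K [[M HM] HK]].
  destruct (HK ((3 * Rabs M + 10, 0), 0)) as [g [y [Hg [Ky E]]]].
  pose proof (bounded3_rcoord K M y HM Ky) as By.
  pose proof (By I1); pose proof (By I2); pose proof (By I3); pose proof (Rle_abs M).
  assert (S : sum3 ((3 * Rabs M + 10, 0), 0) = 3 * Rabs M + 10) by (unfold sum3; simpl; ring).
  rewrite E in S; unfold action in S.
  rewrite (sum3_motion_affine g) in S by apply motion_of_spec, Hg.
  rewrite sum3_rcoord in S; destruct (msign (motion_of g)); lra.
Qed.

Theorem mainTheorem10 (p0 : pt) :
  exists (phi : ((pt -> Prop) -> Prop) -> Z3) (A : (pt -> pt) -> R3 -> R3),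
    (forall S T, vertexX Htri p0 S -> vertexX Htri p0 T -> phi S = phi T -> S = T) /\
    (forall z, exists S, vertexX Htri p0 S /\ phi S = z) /\
    (forall C, (forall S, C S -> vertexX Htri p0 S) ->
       (isCubeX Htri p0 C <-> isCubeZ3 (fun z => exists S, C S /\ phi S = z))) /\
    (forall g, inG g -> affine3 (A g) /\
       forall S, vertexX Htri p0 S ->
         vertexX Htri p0 (act_section Htri g S) /\
         ofZ3 (phi (act_section Htri g S)) = A g (ofZ3 (phi S))) /\
    (forall K, bounded3 K -> exists l : list (pt -> pt),
       forall g, inG g -> (exists x, K x /\ K (A g x)) -> In g l) /\
    (exists c : R,
       (forall g, inG g -> forall x, sum3 x = c -> sum3 (A g x) = c) /\
       exists K, bounded3 K /\ (forall x, K x -> sum3 x = c) /\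
         forall x, sum3 x = c -> exists g y, inG g /\ K y /\ x = A g y) /\
    ~ (exists K, bounded3 K /\ forall x : R3, exists g y, inG g /\ K y /\ x = A g y).
Proof.
  exists vertex_coords, action.
  split; [| split; [| split; [| split; [| split; [| split]]]]].
  - intros S T HS HT E; apply vertexX_iff in HS as [z ->]; apply vertexX_iff in HT as [w ->].
    rewrite !vertex_coords_sigmaZ in E; subst; reflexivity.
  - intro z; exists (sigmaZ z); split; [apply vertexX_sigmaZ | apply vertex_coords_sigmaZ].
  - exact (isCubeX_iff p0).
  - intros g Hg; split; [apply motion_affine_affine |].
    intros S HS; apply vertexX_iff in HS as [z ->].
    rewrite (act_section_sigmaZ g (motion_of g) z (inG_surjective g Hg) (motion_of_spec g Hg)).
    split; [apply vertexX_sigmaZ |].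
    rewrite !vertex_coords_sigmaZ; apply ofZ3_zact.
  - exact action_proper.
  - exists (-3/2); split; [intros g Hg x; apply action_preserves_plane, Hg |].
    exact action_cocompact_on_plane.
  - exact action_not_cocompact.
Qed.
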